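(* In the SLAR setting, let $(w^{(t)})_{t\ge0}$ be the sequence produced by adversarial training. Let $x_i$ be a non-robust feature. Then for all $t>0$: if $w_i^{(t)}>0$ then $w_i^{(t+1)}\le 0$, and if $w_i^{(t)}<0$ then $w_i^{(t+1)}\ge0$.
   Context: SLAR setting: $(x,y)$ is drawn from a distribution $\mathcal D$ on $\mathbb R^d\times\{-1,+1\}$, $x=(x_1,\dots,x_d)$ with finite second moments, such that (A1) for each $i$ there is a constant $\mu_i$ with $\mathbb E[x_i\mid y]=y\mu_i$ for $y\in\{-1,1\}$, and (A2) the coordinates $x_1,\dots,x_d$ are mutually independent conditionally on $y$. Fix $\lambda>0$ and a perturbation budget $\varepsilon>0$; $\mathcal B(\varepsilon)=\{a\in\mathbb R^d:\|a\|_\infty\le\varepsilon\}$. A perturbation function is a measurable map $\delta$ assigning to each $(x,y)$ a vector $\delta(x,y)\in\mathcal B(\varepsilon)$. For a perturbation function $\delta$ and $w\in\mathbb R^d$ let $U(\delta,w)=\mathbb E_{(x,y)\sim\mathcal D}[\max(0,1-yw^\top(x+\delta(x,y)))]+\frac{\lambda}{2}\|w\|_2^2$. A feature $x_i$ is non-robust if $|\mu_i|\le\varepsilon$, and robust otherwise. $\operatorname{sign}$ is coordinatewise with $\operatorname{sign}(0)=0$. Adversarial training (AT): from an arbitrary $w^{(0)}\in\mathbb R^d$, for $t\ge1$ set $\delta^{(t)}(x,y)=-y\varepsilon\operatorname{sign}(w^{(t-1)})$ and $w^{(t)}=\arg\min_{w\in\mathbb R^d}U(\delta^{(t)},w)$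 (this minimizer is unique). *)

From HB Require Import structures.
From mathcomp Require Import all_boot all_order all_algebra.
From mathcomp Require Import all_classical all_reals all_analysis.
Set Implicit Arguments. Unset Strict Implicit. Unset Printing Implicit Defensive.
Import Order.TTheory GRing.Theory Num.Theory.
Import numFieldNormedType.Exports.
Local Open Scope classical_set_scope.
Local Open Scope ring_scope.

Section SLAR.
Context {R : realType} {d : measure_display} {T : measurableType d}.
Variable (P : probability T R) (n : nat).
Variables (X : 'I_n -> T -> R) (Y : T -> R).

Definition xvec (t : T) : 'rV[R]_n := \row_i X i t.

Definition dotv (w x : 'rV[R]_n) : R := \sum_(i < n) w 0 i * x 0 i.

Definition hinge (z : R) : R := Num.max 0 z.

Definition Yeq (c : R) : set T := [set t | Y t = c].

Definition condP (c : R) (A : set T) : R :=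
  fine (P (Yeq c `&` A)) / fine (P (Yeq c)).

Definition SLAR (mu : 'I_n -> R) : Prop :=
  [/\ (forall i, measurable_fun setT (X i)) /\ measurable_fun setT Y,
      (forall t, Y t = 1 \/ Y t = -1),
      (forall i, integrable P setT (fun t => ((X i t) ^+ 2)%:E)),
      (* (A1)  E[x_i | y] = y mu_i, i.e. E[x_i 1_{y=c}] = c mu_i P(y=c) *)
      (forall i (c : R), (c = 1 \/ c = -1) ->
         ((\int[P]_(t in Yeq c) (X i t)%:E)%E = ((c * mu i)%:E * P (Yeq c))%E))
    & (* (A2) coordinates mutually independent conditionally on y *)
      (forall (c : R) (B : 'I_n -> set R), (c = 1 \/ c = -1) ->
         (0 < P (Yeq c))%E -> (forall i, measurable (B i)) ->
         condP c (\bigcap_(i in [set: 'I_n]) (X i @^-1` B i))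
         = \prod_(i < n) condP c (X i @^-1` B i))].

Definition U (lam : R) (delta : 'rV[R]_n -> R -> 'rV[R]_n) (w : 'rV[R]_n)
  : \bar R :=
  ((\int[P]_t (hinge (1 - Y t * dotv w (xvec t + delta (xvec t) (Y t))))%:E)%E
   + (lam / 2 * \sum_(i < n) w 0 i ^+ 2)%:E)%E.

(* coordinatewise sign with sign(0) = 0 *)
Definition signv (w : 'rV[R]_n) : 'rV[R]_n := map_mx Num.sg w.

Definition AT_delta (eps : R) (wprev : 'rV[R]_n) : 'rV[R]_n -> R -> 'rV[R]_n :=
  fun _ y => (- (y * eps)) *: signv wprev.

Definition is_AT_sequence (lam eps : R) (w : nat -> 'rV[R]_n) : Prop :=
  forall t, (0 < t)%N -> forall v : 'rV[R]_n,
    (U lam (AT_delta eps (w t.-1)) (w t) <= U lam (AT_delta eps (w t.-1)) v)%E.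

End SLAR.

From mathcomp Require Import all_boot all_order all_algebra.
From mathcomp Require Import all_classical all_reals all_analysis.
From mathcomp Require Import measurable_realfun ring lra.
Set Implicit Arguments. Unset Strict Implicit. Unset Printing Implicit Defensive.
Import Order.TTheory GRing.Theory Num.Theory.
Local Open Scope classical_set_scope.
Local Open Scope ring_scope.

(* Let s = sign (w_i^(t)) and v = w^(t+1), and suppose s v_i > 0.  Write v' for v
   with its i-th coordinate set to 0.  The hinge argument splits as
   L_v = L_v' + s v_i Z with Z = eps - s y x_i, where L_v' does not involve x_i,
   and hinge (a + b) >= hinge a + b 1_{a > 0}; hence
   E hinge L_v >= E hinge L_v' + s v_i E[Z; L_v' > 0].  Given y = c, the event
   {L_v' > 0} depends only on the x_j, j <> i, so by (A2) and a pi-lambda argument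
   it is independent of x_i, and E[Z; y = c, L_v' > 0] = (eps - s mu_i) P(y = c, L_v' > 0),
   which is nonnegative since |mu_i| <= eps.  Therefore
   U(v') <= U(v) - lam/2 v_i^2 < U(v), contradicting the minimality of v. *)

Section proportional_laws.
Context {R : realType} {d : measure_display} {T : measurableType d}.
Variable mu : {measure set T -> \bar R}.

Lemma integral_mrestr (S : set T) (mS : measurable S) (h : T -> \bar R) :
  measurable_fun setT h ->
  (\int[mu]_(x in S) h x = \int[mrestr mu mS]_x h x)%E.
Proof.
move=> mh; rewrite -(setUv S) integral_setU//; last 3 first.
- exact: measurableC.
- by rewrite setUv.
- by rewrite disj_set2E setICr.
rewrite [X in (_ + X)%E]null_set_integral; last 3 first.
- exact: measurableC.
- exact: measurable_funTS.
- by rewrite /= /mrestr setICl measure0.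
rewrite adde0; apply: eq_measure_integral => A mA AS.
by rewrite /= /mrestr setIidl.
Qed.

Variables (f : T -> R) (S S' : set T) (k : R).
Hypotheses (mf : measurable_fun setT f) (mS : measurable S) (mS' : measurable S').
Hypothesis k_ge0 : 0 <= k.
Hypothesis law_prop : forall B, measurable B ->
  mu (f @^-1` B `&` S) = (k%:E * mu (f @^-1` B `&` S'))%E.

Lemma ge0_integral_comp_law_prop (g : R -> \bar R) :
  measurable_fun setT g -> (forall x, 0 <= g x)%E ->
  (\int[mu]_(x in S) g (f x) = k%:E * \int[mu]_(x in S') g (f x))%E.
Proof.
move=> mg g0; have mgf : measurable_fun setT (g \o f) by exact: measurableT_comp.
have push D (mD : measurable D) :
    (\int[mu]_(x in D) g (f x) = \int[pushforward (mrestr mu mD) f]_y g y)%E.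
  by rewrite integral_mrestr// ge0_integral_pushforward.
rewrite (push _ mS) (push _ mS') -[k]/((NngNum k_ge0)%:num) -ge0_integral_mscale//.
by apply: eq_measure_integral => B mB _; exact: law_prop.
Qed.

Lemma integral_law_prop : mu.-integrable S' (EFin \o f) ->
  (\int[mu]_(x in S) (f x)%:E = k%:E * \int[mu]_(x in S') (f x)%:E)%E.
Proof.
move=> intf; have mEFin : measurable_fun setT (@EFin R) by exact/measurable_EFinP.
rewrite [LHS]integralE [in RHS]integralE !(funepos_comp EFin f) !(funeneg_comp EFin f).
rewrite !(ge0_integral_comp_law_prop (measurable_funepos mEFin) (funepos_ge0 _)).
rewrite !(ge0_integral_comp_law_prop (measurable_funeneg mEFin) (funeneg_ge0 _)).
rewrite -muleBr// fin_num_adde_defl// fin_numN.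
by have := integrable_neg_fin_num mS' intf; rewrite funeneg_comp.
Qed.

End proportional_laws.

Section conditional_independence.
Context {R : realType} {d : measure_display} {T : measurableType d}.
Variables (P : probability T R) (n : nat) (X : 'I_n -> T -> R) (Y : T -> R).
Hypotheses (mX : forall i, measurable_fun setT (X i)) (mY : measurable_fun setT Y).
Hypothesis cond_indep : forall (c : R) (B : 'I_n -> set R), (c = 1 \/ c = -1) ->
  (0 < P (Yeq Y c))%E -> (forall i, measurable (B i)) ->
  condP P Y c (\bigcap_(i in [set: 'I_n]) (X i @^-1` B i))
  = \prod_(i < n) condP P Y c (X i @^-1` B i).

Lemma measurable_Yeq c : measurable (Yeq Y c).
Proof.
have := mY measurableT (measurable_set1 c); rewrite setTI.
by congr measurable; apply/seteqP; split => t /=.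
Qed.

Lemma measurable_preimageX j {B} : measurable B -> measurable (X j @^-1` B).
Proof. by move=> mB; have := mX j measurableT mB; rewrite setTI. Qed.

Lemma condP_ge0 c A : 0 <= condP P Y c A.
Proof. by rewrite /condP divr_ge0// fine_ge0. Qed.

Lemma condPE c A : measurable A ->
  P (Yeq Y c `&` A) = ((condP P Y c A)%:E * P (Yeq Y c))%E.
Proof.
move=> mA; have mYA : measurable (Yeq Y c `&` A).
  exact: measurableI (measurable_Yeq c) mA.
have [P0|Pn0] := eqVneq (P (Yeq Y c)) 0%E.
  rewrite P0 mule0; apply/eqP; rewrite eq_le measure_ge0 andbT -P0.
  by apply: le_measure; rewrite ?inE//; exact: measurable_Yeq.
have fineP0 : fine (P (Yeq Y c)) != 0.
  by rewrite fine_eq0// fin_num_measure//; exact: measurable_Yeq.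
rewrite -[P (Yeq Y c)]fineK ?fin_num_measure//; last exact: measurable_Yeq.
by rewrite -EFinM /condP divfK// fineK// fin_num_measure.
Qed.

(* A pi-system generating the sigma-algebra of the coordinates [x_j], [j != i]. *)
Definition cylinder_off i : set (set T) :=
  [set \bigcap_(j in [set: 'I_n]) (X j @^-1` B j) |
   B in [set B : 'I_n -> set R | (forall j, measurable (B j)) /\ B i = setT]].

Lemma cylinder_off_measurable i : cylinder_off i `<=` measurable.
Proof.
move=> _ [B [mB _] <-]; apply: fin_bigcap_measurable; first exact: finite_finset.
by move=> j _; exact: measurable_preimageX.
Qed.

Lemma sigma_cylinder_off_measurable i : <<s cylinder_off i >> `<=` measurable.
Proof.
by apply: smallest_sub; [exact: sigma_algebra_measurable|exact: cylinder_off_measurable].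
Qed.

Lemma setI_closed_cylinder_off i : setI_closed (cylinder_off i).
Proof.
move=> _ _ [B [mB Bi] <-] [B' [mB' B'i] <-].
exists (fun j => B j `&` B' j).
  by split; [move=> j; exact: measurableI|rewrite Bi B'i setTI].
apply/seteqP; split => t /=.
- by move=> h; split => j _; have [] := h j I.
- by move=> [h1 h2] j _; split; [exact: h1|exact: h2].
Qed.

Lemma setT_cylinder_off i : cylinder_off i setT.
Proof.
exists (fun=> setT); first by split.
by apply/seteqP; split => t //= _ j _.
Qed.

Lemma cond_indep_cylinder_off c i B A : (c = 1 \/ c = -1) -> measurable B ->
  cylinder_off i A ->
  P (A `&` (Yeq Y c `&` X i @^-1` B)) =
  ((condP P Y c (X i @^-1` B))%:E * P (A `&` Yeq Y c))%E.
Proof.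
move=> c1 mB cA; have mA := cylinder_off_measurable cA.
have mXB := measurable_preimageX i mB.
rewrite setIC -setIA [A `&` _]setIC !condPE//; last exact: measurableI.
have [P0|Pn0] := eqVneq (P (Yeq Y c)) 0%E; first by rewrite P0 !mule0.
have Pgt0 : (0 < P (Yeq Y c))%E by rewrite lt0e Pn0 measure_ge0.
move: cA => [Bs [mBs Bsi] defA].
pose B' j := if j == i then B else Bs j.
have mB' j : measurable (B' j) by rewrite /B'; case: ifP.
have eA : X i @^-1` B `&` A = \bigcap_(j in [set: 'I_n]) (X j @^-1` B' j).
  rewrite -defA; apply/seteqP; split => t /=.
  - move=> [XBt At] j _; rewrite /B'; case: eqP => [->//|_]; exact: At.
  - move=> h; split; first by have := h i I; rewrite /B' eqxx.
    move=> j _; have := h j I; rewrite /B'; case: eqP => [->|//].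
    by rewrite Bsi.
have := cond_indep c1 Pgt0 mB'; have := cond_indep c1 Pgt0 mBs.
rewrite -eA defA (bigD1 i)//= [in X in _ -> X](bigD1 i)//= /B' eqxx Bsi preimage_setT.
have -> : condP P Y c setT = 1.
  by rewrite /condP setIT divff// fine_eq0// fin_num_measure//; exact: measurable_Yeq.
move=> -> ->; rewrite mul1r muleA -EFinM; congr ((_ * _)%:E * _)%E.
by apply: eq_bigr => j /negbTE ->.
Qed.

Lemma cond_indep_sigma c i B A : (c = 1 \/ c = -1) -> measurable B ->
  <<s cylinder_off i >> A ->
  P (A `&` (Yeq Y c `&` X i @^-1` B)) =
  ((condP P Y c (X i @^-1` B))%:E * P (A `&` Yeq Y c))%E.
Proof.
move=> c1 mB; have mXB := measurable_preimageX i mB.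
pose m1 := mrestr P (measurableI _ _ (measurable_Yeq c) mXB).
pose m2 := mscale (NngNum (condP_ge0 c (X i @^-1` B))) (mrestr P (measurable_Yeq c)).
apply: (g_sigma_algebra_measure_unique (cylinder_off i) _ (fun=> setT) _ _ m1 m2).
- exact: cylinder_off_measurable.
- by move=> _; exact: setT_cylinder_off.
- by rewrite bigcup_const.
- exact: setI_closed_cylinder_off.
- by move=> A' cA'; exact: cond_indep_cylinder_off.
- by move=> _; rewrite ltey_eq fin_num_measure.
Qed.

Lemma sigma_cylinder_off_preimage i (a b : 'I_n -> R) V : a i = 0 -> measurable V ->
  <<s cylinder_off i >> ((fun t => \sum_(j < n) a j * (X j t - b j)) @^-1` V).
Proof.
move=> ai0 mV; pose T' := g_sigma_algebraType (cylinder_off i).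
have mXj j : j != i -> measurable_fun (setT : set T') (X j).
  move=> ji _ B mB; rewrite setTI; apply: sub_sigma_algebra.
  exists (fun k => if k == j then B else setT).
    by split=> [k|]; [case: ifP|rewrite eq_sym (negbTE ji)].
  apply/seteqP; split => t /=.
  - by move=> h; have := h j I; rewrite eqxx.
  - by move=> Bt k _; case: eqP => [->//|].
have mf : measurable_fun (setT : set T') (fun t => \sum_(j < n) a j * (X j t - b j)).
  apply: measurable_sum => j; have [->|ji] := eqVneq j i.
    by under eq_fun do rewrite ai0 mul0r; exact: measurable_cst.
  apply: measurable_funM; first exact: measurable_cst.
  by apply: measurable_funB; [exact: mXj|exact: measurable_cst].
by have := mf measurableT V mV; rewrite setTI.
Qed.

Lemma cond_integral_sigma c i A (m : R) : (c = 1 \/ c = -1) ->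
  P.-integrable (Yeq Y c) (EFin \o X i) ->
  (\int[P]_(t in Yeq Y c) (X i t)%:E = m%:E * P (Yeq Y c))%E ->
  <<s cylinder_off i >> A ->
  (\int[P]_(t in Yeq Y c `&` A) (X i t)%:E = m%:E * P (Yeq Y c `&` A))%E.
Proof.
move=> c1 intX hX sA; have mA := sigma_cylinder_off_measurable sA.
have mYc := measurable_Yeq c.
have law_prop B : measurable B -> P (X i @^-1` B `&` (Yeq Y c `&` A)) =
    ((condP P Y c A)%:E * P (X i @^-1` B `&` Yeq Y c))%E.
  move=> mB; have mXB := measurable_preimageX i mB.
  have -> : X i @^-1` B `&` (Yeq Y c `&` A) = A `&` (Yeq Y c `&` X i @^-1` B).
    by apply/seteqP; split => t /= [? [? ?]].
  by rewrite cond_indep_sigma// setIC condPE// setIC condPE// muleCA.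
rewrite (integral_law_prop (mX i) (measurableI _ _ mYc mA) mYc (condP_ge0 c A)) //.
by rewrite hX condPE// muleCA.
Qed.

End conditional_independence.

Lemma hinge_addr_ge {R : realType} (x y : R) :
  hinge x + (if 0 < x then y else 0) <= hinge (x + y).
Proof.
rewrite /hinge; case: ifP => [x_gt0|/negbT]; last first.
  by rewrite -leNgt => x_le0; rewrite (max_l x_le0) addr0 le_max lexx.
by rewrite (max_r (ltW x_gt0)) le_max lexx orbT.
Qed.

Definition row_erase {R : nmodType} n (i : 'I_n) (v : 'rV[R]_n) : 'rV[R]_n :=
  \row_j (if j == i then 0 else v 0 j).

Lemma row_erase_id {R : nmodType} n (i : 'I_n) (v : 'rV[R]_n) : row_erase i v 0 i = 0.
Proof. by rewrite mxE eqxx. Qed.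

Lemma row_erase_neq {R : nmodType} n (i j : 'I_n) (v : 'rV[R]_n) :
  j != i -> row_erase i v 0 j = v 0 j.
Proof. by move=> /negbTE ji; rewrite mxE ji. Qed.

Lemma sum_row_erase {R : nmodType} n (i : 'I_n) (v : 'rV[R]_n) (F : 'I_n -> R -> R) :
  F i 0 = 0 ->
  \sum_(j < n) F j (v 0 j) = F i (v 0 i) + \sum_(j < n) F j (row_erase i v 0 j).
Proof.
move=> Fi0; rewrite (bigD1 i)//= [in RHS](bigD1 i)//= row_erase_id Fi0 add0r.
by congr (_ + _); apply: eq_bigr => j ji; rewrite row_erase_neq.
Qed.

Lemma sgr_pm1 {R : realDomainType} (x : R) : x != 0 -> Num.sg x = 1 \/ Num.sg x = -1.
Proof.
by move=> x0; case: (ltrgtP x 0) => [/ltr0_sg|/gtr0_sg|/eqP]; [right|left|rewrite (negbTE x0)].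
Qed.

Section adversarial_training_step.
Context {R : realType} {d : measure_display} {T : measurableType d}.
Variables (P : probability T R) (n : nat) (X : 'I_n -> T -> R) (Y : T -> R).

Definition adv_margin (u z : 'rV[R]_n) (eps : R) (t : T) : R :=
  1 - Y t * \sum_(j < n) z 0 j * (X j t - Y t * eps * Num.sg (u 0 j)).

Lemma U_adv_margin lam eps u z : U P X Y lam (AT_delta eps u) z =
  (\int[P]_t (hinge (adv_margin u z eps t))%:E + (lam / 2 * \sum_(j < n) z 0 j ^+ 2)%:E)%E.
Proof.
congr (_ + _)%E; apply: eq_integral => t _; congr (hinge _)%:E.
rewrite /dotv /xvec /AT_delta /signv /adv_margin; congr (_ - _ * _).
by apply: eq_bigr => j _; rewrite !mxE; ring.
Qed.

Hypotheses (mX : forall i, measurable_fun setT (X i)) (mY : measurable_fun setT Y).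
Hypothesis Y_pm1 : forall t, Y t = 1 \/ Y t = -1.
Hypothesis X_sqr_integrable : forall i, P.-integrable setT (fun t => (X i t ^+ 2)%:E).

Lemma normY t : `|Y t| = 1.
Proof. by case: (Y_pm1 t) => ->; rewrite ?normrN normr1. Qed.

Lemma integrable_X j : P.-integrable setT (EFin \o X j).
Proof.
apply: (le_integrable measurableT _ _ (integrableD measurableT
   (finite_measure_integrable_cst P 1 measurableT) (X_sqr_integrable j))).
  exact/measurable_EFinP.
move=> t _ /=; rewrite lee_fin [leRHS]ger0_norm ?addr_ge0 ?sqr_ge0//.
rewrite -real_normK ?num_real//; have := normr_ge0 (X j t).
set y := `|X j t| => y_ge0; have := sqr_ge0 (y - 1); nra.
Qed.

Lemma integrable_affine_bound (f : T -> R) (C : R) (K : 'I_n -> R) :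
  measurable_fun setT f ->
  (forall t, `|f t| <= C + \sum_(j < n) K j * `|X j t|) ->
  P.-integrable setT (EFin \o f).
Proof.
move=> mf f_le; pose g t := (C + \sum_(j < n) K j * `|X j t|)%:E.
have ig : P.-integrable setT g.
  have -> : g = fun t => ((cst C t)%:E + \sum_(j < n) (K j)%:E * `|(X j t)%:E|)%E.
    by apply/funext => t; rewrite /g EFinD -sumEFin; congr (_ + _)%E.
  apply: (integrableD measurableT); first exact: finite_measure_integrable_cst.
  apply: (integrable_sum measurableT) => j _; apply: (integrableZl measurableT).
  exact: integrable_abse (integrable_X j).
apply: (le_integrable measurableT _ _ ig); first exact/measurable_EFinP.
by move=> t _; rewrite /g !abse_EFin lee_fin (le_trans (f_le t)) ?ler_norm.
Qed.

Lemma measurable_adv_margin u z eps : measurable_fun setT (adv_margin u z eps).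
Proof.
apply: measurable_funB; first exact: measurable_cst.
apply: measurable_funM => //; apply: measurable_sum => j.
apply: measurable_funM; first exact: measurable_cst.
apply: measurable_funB => //; apply: measurable_funM; last exact: measurable_cst.
by apply: measurable_funM => //; exact: measurable_cst.
Qed.

Lemma adv_margin_bound u z eps t : 0 <= eps -> `|adv_margin u z eps t| <=
  (1 + eps * \sum_(j < n) `|z 0 j|) + \sum_(j < n) `|z 0 j| * `|X j t|.
Proof.
move=> eps_ge0; rewrite /adv_margin.
apply: (le_trans (ler_normB _ _)); rewrite normr1 normrM normY mul1r -addrA lerD2l.
apply: (le_trans (ler_norm_sum _ _ _)).
rewrite mulr_sumr -big_split /=; apply: ler_sum => j _.
rewrite normrM (mulrC eps) -mulrDr; apply: ler_wpM2l => //.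
apply: (le_trans (ler_normB _ _)); rewrite addrC lerD2r !normrM normY mul1r ger0_norm//.
by rewrite ler_piMr// normr_sg; case: (_ == 0).
Qed.

Lemma measurable_adv_margin_gt0 u z eps :
  measurable [set t | 0 < adv_margin u z eps t].
Proof.
have := measurable_adv_margin u z eps measurableT (measurable_itv `]0, +oo[).
by rewrite setTI; congr measurable; apply/seteqP; split => t /=; rewrite in_itv/= andbT.
Qed.

Lemma integrable_hinge_adv_margin u z eps : 0 <= eps ->
  P.-integrable setT (fun t => (hinge (adv_margin u z eps t))%:E).
Proof.
move=> eps_ge0; apply: integrable_affine_bound.
  by apply: measurable_maxr; [exact: measurable_cst|exact: measurable_adv_margin].
move=> t; apply: le_trans (adv_margin_bound u z t eps_ge0).
by rewrite /hinge; case: (lerP 0 (adv_margin u z eps t)) => [|_]; rewrite ?normr0.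
Qed.

Variable mu : 'I_n -> R.
Hypothesis cond_mean : forall i (c : R), (c = 1 \/ c = -1) ->
  (\int[P]_(t in Yeq Y c) (X i t)%:E = (c * mu i)%:E * P (Yeq Y c))%E.
Hypothesis cond_indep : forall (c : R) (B : 'I_n -> set R), (c = 1 \/ c = -1) ->
  (0 < P (Yeq Y c))%E -> (forall i, measurable (B i)) ->
  condP P Y c (\bigcap_(i in [set: 'I_n]) (X i @^-1` B i))
  = \prod_(i < n) condP P Y c (X i @^-1` B i).

Lemma integrable_nonrobust_gain (eps : R) i (s : R) :
  0 <= eps -> (s = 1 \/ s = -1) -> P.-integrable setT (fun t => (eps - s * Y t * X i t)%:E).
Proof.
move=> eps_ge0 s1; apply: (integrable_affine_bound (C := eps) (K := fun j => (j == i)%:R)).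
  apply: measurable_funB; first exact: measurable_cst.
  by apply: measurable_funM => //; apply: measurable_funM => //; exact: measurable_cst.
move=> t; rewrite (bigD1 i)//= eqxx mul1r big1 ?addr0; last first.
  by move=> j /negbTE ->; rewrite mul0r.
rewrite (le_trans (ler_normB _ _))// ger0_norm// lerD2l !normrM normY mulr1.
by case: s1 => ->; rewrite ?normrN normr1 mul1r.
Qed.

Lemma cond_nonrobust_gain_ge0 (u z : 'rV[R]_n) (eps : R) i (c s : R) :
  (c = 1 \/ c = -1) -> (s = 1 \/ s = -1) -> z 0 i = 0 -> `|mu i| <= eps ->
  (0 <= \int[P]_(t in Yeq Y c `&` [set t | (0 < adv_margin u z eps t)%R])
          (eps - s * Y t * X i t)%:E)%E.
Proof.
move=> c1 s1 zi0 mu_le.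
pose A := [set t | 0 < 1 - c * \sum_(j < n) z 0 j * (X j t - c * eps * Num.sg (u 0 j))].
have sA : <<s cylinder_off X i >> A.
  have mV : measurable [set x : R | 0 < 1 - c * x].
    have := measurable_funB (measurable_cst (1 : R))
      (measurable_funM (measurable_cst c) (@measurable_id _ R setT))
      measurableT (measurable_itv `]0, +oo[).
    by rewrite setTI; congr measurable; apply/seteqP; split => x /=; rewrite in_itv/= andbT.
  exact: (sigma_cylinder_off_preimage (X := X) (fun j => c * eps * Num.sg (u 0 j))
    zi0 mV).
have mYA : measurable (Yeq Y c `&` A).
  exact: measurableI (measurable_Yeq mY c) (sigma_cylinder_off_measurable mX sA).
have -> : Yeq Y c `&` [set t | 0 < adv_margin u z eps t] = Yeq Y c `&` A.
  by apply/seteqP; split => t /= [Yt ht]; split => //; move: ht; rewrite /adv_margin Yt.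
rewrite (eq_integral (fun t => eps%:E - (s * c)%:E * (X i t)%:E)%E); last first.
  by move=> t; rewrite inE => -[Yt _]; rewrite Yt -EFinM -EFinB.
have intXA : P.-integrable (Yeq Y c `&` A) (EFin \o X i).
  exact: integrableS measurableT mYA (subsetT _) (integrable_X i).
rewrite integralB//; last 2 first.
- exact: finite_measure_integrable_cst.
- exact: integrableZl.
rewrite integralZl// (cond_integral_sigma mX mY cond_indep c1 _ (cond_mean i c1) sA);
  last first.
  exact: integrableS measurableT (measurable_Yeq mY c) (subsetT _) (integrable_X i).
rewrite integral_cst// muleA -EFinM -muleBl ?fin_num_measure//.
rewrite -EFinB mule_ge0 ?measure_ge0// lee_fin.
have -> : s * c * (c * mu i) = s * mu i * (c * c) by ring.
have -> : c * c = 1 by case: c1 => ->; ring.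
rewrite mulr1 subr_ge0 (le_trans _ mu_le)//.
by case: s1 => ->; rewrite ?mul1r ?mulN1r ler_normr lexx ?orbT.
Qed.

Lemma nonrobust_gain_ge0 (u z : 'rV[R]_n) (eps : R) i (s : R) : (s = 1 \/ s = -1) ->
  z 0 i = 0 -> `|mu i| <= eps ->
  (0 <= \int[P]_(t in [set t | (0 < adv_margin u z eps t)%R])
          (eps - s * Y t * X i t)%:E)%E.
Proof.
move=> s1 zi0 mu_le; set A := [set t | _]; have mA := measurable_adv_margin_gt0 u z eps.
have -> : A = (Yeq Y 1 `&` A) `|` (Yeq Y (-1) `&` A).
  apply/seteqP; split => [t At|t [] []//].
  by case: (Y_pm1 t) => Yt; [left|right].
have eps_ge0 : 0 <= eps := le_trans (normr_ge0 _) mu_le.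
rewrite integral_setU.
- by apply: adde_ge0; apply: cond_nonrobust_gain_ge0 => //; [left|right].
- exact: measurableI (measurable_Yeq mY 1) mA.
- exact: measurableI (measurable_Yeq mY (-1)) mA.
- exact/measurable_funTS/measurable_int/(integrable_nonrobust_gain i eps_ge0 s1).
- rewrite disj_set2E; apply/eqP/seteqP; split => t //= [[Yt _] [Yt' _]].
  by move: Yt'; rewrite /Yeq /= Yt; lra.
Qed.

Lemma adv_margin_row_erase (u v : 'rV[R]_n) (eps : R) i t : u 0 i != 0 ->
  adv_margin u v eps t = adv_margin u (row_erase i v) eps t
    + Num.sg (u 0 i) * v 0 i * (eps - Num.sg (u 0 i) * Y t * X i t).
Proof.
move=> ui0; rewrite /adv_margin.
rewrite (sum_row_erase (i := i) v
  (F := fun j x => x * (X j t - Y t * eps * Num.sg (u 0 j)))) ?mul0r//=.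
by case: (Y_pm1 t) => ->; case: (sgr_pm1 ui0) => ->; ring.
Qed.

Lemma hinge_risk_row_erase (u v : 'rV[R]_n) (eps : R) i : 0 <= eps -> u 0 i != 0 ->
  (\int[P]_t (hinge (adv_margin u (row_erase i v) eps t))%:E
   + (Num.sg (u 0 i) * v 0 i)%:E
     * \int[P]_(t in [set t | (0 < adv_margin u (row_erase i v) eps t)%R])
         (eps - Num.sg (u 0 i) * Y t * X i t)%:E
   <= \int[P]_t (hinge (adv_margin u v eps t))%:E)%E.
Proof.
move=> eps_ge0 ui0; set v' := row_erase i v; set s := Num.sg (u 0 i).
set A := [set t | _]; have mA : measurable A := measurable_adv_margin_gt0 u v' eps.
have iZ := integrable_nonrobust_gain i eps_ge0 (sgr_pm1 ui0).
have iZA : P.-integrable setT ((fun t => (eps - s * Y t * X i t)%:E) \_ A).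
  by apply/(integrable_mkcond _ mA); exact: integrableS measurableT mA (subsetT _) iZ.
rewrite (integral_mkcond A) -integralZl// -integralD//;
  [|exact: integrable_hinge_adv_margin|exact: integrableZl].
apply: le_integral => //.
- by apply: integrableD => //; [exact: integrable_hinge_adv_margin|exact: integrableZl].
- exact: integrable_hinge_adv_margin.
move=> t _; rewrite (adv_margin_row_erase v eps t ui0) -/v' -/s patchE.
have := hinge_addr_ge (adv_margin u v' eps t) (s * v 0 i * (eps - s * Y t * X i t)).
have [L_gt0|L_le0] := boolP (0 < adv_margin u v' eps t).
- by rewrite mem_set//= -EFinM -EFinD lee_fin.
- by rewrite memNset ?mule0 ?adde0 ?addr0 ?lee_fin//; exact/negP.
Qed.

Lemma AT_minimizer_sign (lam eps : R) (u v : 'rV[R]_n) i :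
  0 < lam -> 0 < eps -> `|mu i| <= eps -> u 0 i != 0 ->
  (forall z, U P X Y lam (AT_delta eps u) v <= U P X Y lam (AT_delta eps u) z)%E ->
  Num.sg (u 0 i) * v 0 i <= 0.
Proof.
move=> lam_gt0 eps_gt0 mu_le ui0 v_min; rewrite leNgt; apply/negP => a_gt0.
have vi_sqr_gt0 : 0 < v 0 i ^+ 2.
  by rewrite exprn_even_gt0//; apply: contraTneq a_gt0 => ->; rewrite mulr0 ltxx.
have fin_hinge z : (\int[P]_t (hinge (adv_margin u z eps t))%:E)%E \is a fin_num.
  exact: integrable_fin_num (integrable_hinge_adv_margin u z (ltW eps_gt0)).
set A := [set t | (0 < adv_margin u (row_erase i v) eps t)%R].
have mA : measurable A := measurable_adv_margin_gt0 u (row_erase i v) eps.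
have fin_gain :
    (\int[P]_(t in A) (eps - Num.sg (u 0 i) * Y t * X i t)%:E)%E \is a fin_num.
  apply: (integrable_fin_num mA); apply: (integrableS measurableT mA (subsetT _)).
  exact: integrable_nonrobust_gain (ltW eps_gt0) (sgr_pm1 ui0).
have := v_min (row_erase i v); rewrite !U_adv_margin.
rewrite (sum_row_erase (i := i) (F := fun _ x => x ^+ 2) v) ?expr0n//=.
have := hinge_risk_row_erase v (ltW eps_gt0) ui0.
have := @nonrobust_gain_ge0 u (row_erase i v) eps i _ (sgr_pm1 ui0) (row_erase_id i v) mu_le.
rewrite -/A -(fineK (fin_hinge v)) -(fineK (fin_hinge (row_erase i v))) -(fineK fin_gain).
rewrite -!EFinM -!EFinD !lee_fin.
have : 0 < lam / 2 * v 0 i ^+ 2 by rewrite mulr_gt0// divr_gt0.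
nra.
Qed.

End adversarial_training_step.

Theorem mainTheorem8 (R : realType) (d : measure_display) (T : measurableType d)
  (P : probability T R) (n : nat) (X : 'I_n -> T -> R) (Y : T -> R)
  (mu : 'I_n -> R) (lam eps : R) (w : nat -> 'rV[R]_n) :
  SLAR P X Y mu -> 0 < lam -> 0 < eps ->
  is_AT_sequence P X Y lam eps w ->
  forall i : 'I_n, `|mu i| <= eps ->
  forall t : nat, (0 < t)%N ->
    (0 < w t 0 i -> w t.+1 0 i <= 0) /\ (w t 0 i < 0 -> 0 <= w t.+1 0 i).
Proof.
move=> [[mX mY] Y_pm1 X_sqr cond_mean cond_indep] lam_gt0 eps_gt0 w_AT i mu_le t _.
have w_min z : (U P X Y lam (AT_delta eps (w t)) (w t.+1) <=
                U P X Y lam (AT_delta eps (w t)) z)%E by exact: w_AT.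
have sign_le0 := AT_minimizer_sign mX mY Y_pm1 X_sqr cond_mean cond_indep
  lam_gt0 eps_gt0 mu_le _ w_min.
split=> [wti_gt0|wti_lt0].
- by have := sign_le0 (lt0r_neq0 wti_gt0); rewrite gtr0_sg// mul1r.
- by have := sign_le0 (ltr0_neq0 wti_lt0); rewrite ltr0_sg// mulN1r oppr_le0.
Qed.
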